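(* Let $\underline{Q}$ be a lower transition rate operator. Then for any $t>0$ and any $x,y\in\mathcal{X}$: \begin{equation*} \overline{T}_{t}\mathbb{I}_{x}(y)>0 ~~\Leftrightarrow~~ x\text{ is upper reachable from }y. \end{equation*}
   Context: $\mathcal{X}$ is a finite state space and $\mathcal{L}(\mathcal{X})$ is the set of real-valued functions on $\mathcal{X}$; $\mathbb{I}_x$ denotes the indicator of $\{x\}$. A lower transition rate operator is a map $\underline{Q}\colon\mathcal{L}(\mathcal{X})\to\mathcal{L}(\mathcal{X})$ such that for all $f,g\in\mathcal{L}(\mathcal{X})$, $\lambda\geq0$, $\mu\in\mathbb{R}$ and $x,y\in\mathcal{X}$: $\underline{Q}(\mu)=0$; $\underline{Q}(f+g)\geq\underline{Q}(f)+\underline{Q}(g)$; $\underline{Q}(\lambda f)=\lambda\underline{Q}(f)$; and $x\neq y\Rightarrow\underline{Q}(\mathbb{I}_y)(x)\geq0$. Its conjugate is $\overline{Q}f\coloneqq-\underline{Q}(-f)$. For each $t\geq0$, $\underline{T}_t$ is defined for every $f$ by the (uniquely solvable) differential equation $\frac{d}{dt}\underline{T}_tf=\underline{Q}\,\underline{T}_tf$ for all $t\geq0$ with $\underline{T}_0f=f$, and $\overline{T}_tf\coloneqq-\underline{T}_t(-f)$. Upper reachability: $x$ is upper reachable from $y$ if there is a sequence $y=x_0,\dots,x_n=x$ with, for all $k\in\{1,\dots,n\}$, $x_k\neq x_{k-1}$ and $\overline{Q}(\mathbb{I}_{x_k})(x_{k-1})>0$. *)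

From HB Require Import structures.
From mathcomp Require Import all_boot all_order all_algebra.
From mathcomp Require Import all_classical all_reals all_analysis.
Set Implicit Arguments. Unset Strict Implicit. Unset Printing Implicit Defensive.
Import Order.TTheory GRing.Theory Num.Theory.
Import numFieldNormedType.Exports.
Local Open Scope ring_scope.
Local Open Scope classical_set_scope.

(* L(X) is represented as the function type X -> R. *)

Definition indicator1 {X : finType} {R : realType} (x : X) : X -> R :=
  fun z => if z == x then 1 else 0.

Definition lower_transition_rate_operator {X : finType} {R : realType}
  (Q : (X -> R) -> (X -> R)) : Prop :=
  [/\ (forall mu : R, Q (fun _ => mu) = (fun _ => 0)),
      (forall (f g : X -> R) (x : X), Q f x + Q g x <= Q (fun z => f z + g z) x),
      (forall (lam : R) (f : X -> R), 0 <= lam ->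
          Q (fun z => lam * f z) = (fun z => lam * Q f z)) &
      (forall x y : X, x != y -> 0 <= Q (indicator1 y) x)].

Definition upper_op {X : finType} {R : realType}
  (Q : (X -> R) -> (X -> R)) (f : X -> R) : X -> R :=
  fun x => - Q (fun z => - f z) x.

(* T is the (lower) semigroup generated by Q: for every f, t |-> T t f solves
   d/dt T_t f = Q (T_t f) for all t >= 0 (right derivative at t = 0),
   with T_0 f = f. *)
Definition lower_semigroup_of {X : finType} {R : realType}
  (Q : (X -> R) -> (X -> R)) (T : R -> (X -> R) -> (X -> R)) : Prop :=
  forall f : X -> R,
    T 0 f = f /\
    (forall x : X,
       (fun h : R => h^-1 * (T h f x - f x)) @ 0^'+ --> Q f x) /\
    (forall (t : R) (x : X), 0 < t ->
       derivable (fun s : R => T s f x) t 1 /\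
       (fun s : R => T s f x)^`() t = Q (T t f) x).

Definition upper_semigroup {X : finType} {R : realType}
  (T : R -> (X -> R) -> (X -> R)) (t : R) (f : X -> R) : X -> R :=
  fun x => - T t (fun z => - f z) x.

Definition upper_reachable {X : finType} {R : realType}
  (Q : (X -> R) -> (X -> R)) (x y : X) : Prop :=
  exists (n : nat) (s : nat -> X),
    [/\ s 0%N = y, s n = x &
        forall k : nat, (1 <= k <= n)%N ->
          s k != s k.-1 /\ 0 < upper_op Q (indicator1 (s k)) (s k.-1)].

From HB Require Import structures.
From mathcomp Require Import all_boot all_order all_algebra.
From mathcomp Require Import all_classical all_reals all_analysis.
From mathcomp Require Import ring lra.
Import Order.TTheory GRing.Theory Num.Theory.
Import numFieldNormedType.Exports.
Local Open Scope ring_scope.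
Local Open Scope classical_set_scope.

(* Write v_t for the upper semigroup applied to I_x, i.e. v_t = - T_t (- I_x).
   It solves v' = Qbar v, and it is nonnegative because T_t maps nonpositive
   functions to nonpositive ones (Gronwall applied to the sum of the squared
   positive parts of T_t f).  Superadditivity of Q gives, for nonnegative v and
   w <> z, Qbar v (z) >= Q I_z (z) v(z) + Qbar I_w (z) v(w).  Hence
   exp(- Q I_z (z) t) v_t(z) is nondecreasing, so v_t(x) >= exp(Q I_x (x) t) > 0,
   and it increases strictly when v(w) > 0 and Qbar I_w (z) > 0: positivity
   travels backwards along every upper-reachable path ending in x.  Conversely,
   no upper rate leaves the set U of states from which x is not reachable, so
   the sum of v_t over U obeys F' <= C F with F(0+) = 0 and vanishes by
   Gronwall. *)

Section RealAnalysis.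
Context {R : realType}.
Implicit Types (f : R -> R) (r s t : R).

Lemma le_cvg_at_right0 {f} {l c t : R} : 0 < t -> f x @[x --> 0^'+] --> l ->
  (forall s, 0 < s < t -> f s <= c) -> l <= c.
Proof.
move=> t0 fl fc; rewrite -(cvg_lim _ fl) //.
apply: limr_le; first by apply/cvg_ex; exists l.
near=> s; apply: fc; apply/andP; split; near: s.
  exact: nbhs_right_gt.
exact: nbhs_right_lt.
Unshelve. all: by end_near.
Qed.

Lemma cvg_at_right0_of_diff_quotient f (a l : R) :
  (fun h => h^-1 * (f h - a)) @ 0^'+ --> l -> f x @[x --> 0^'+] --> a.
Proof.
move=> dq.
have id0 : (fun h : R => h) @ 0^'+ --> (0 : R).
  by apply: cvg_at_right_filter; exact: cvg_id.
have : (fun h => a + h * (h^-1 * (f h - a))) @ 0^'+ --> a.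
  rewrite -[X in _ --> X]addr0 -[X in _ + X](mul0r l).
  by apply: cvgD; [exact: cvg_cst | exact: cvgM].
apply: cvg_trans; apply: near_eq_cvg; near=> h.
have h0 : h != 0 by apply: lt0r_neq0; near: h; exact: nbhs_right_gt.
by rewrite /=; field.
Unshelve. all: by end_near.
Qed.

Lemma is_derive_fct_sum (I : Type) (r : seq I) (P : pred I) (h : I -> R -> R)
    (dh : I -> R) s :
  (forall i, P i -> is_derive s 1 (h i) (dh i)) ->
  is_derive s 1 (fun x => \sum_(i <- r | P i) h i x) (\sum_(i <- r | P i) dh i).
Proof.
move=> Dh; rewrite -fct_sumE; elim/big_ind2: _ => // [|f1 d1 f2 d2 D1 D2].
  exact: is_derive_cst.
exact: is_deriveD.
Qed.

Lemma cvg_fct_sum (T : Type) (G : set_system T) {FG : Filter G} (I : Type)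
    (r : seq I) (P : pred I) (h : I -> T -> R) (l : I -> R) :
  (forall i, P i -> h i x @[x --> G] --> l i) ->
  (fun x => \sum_(i <- r | P i) h i x) x @[x --> G] --> \sum_(i <- r | P i) l i.
Proof.
move=> Lh; rewrite -fct_sumE; elim/big_ind2: _ => // [|f1 l1 f2 l2 L1 L2].
  exact: cvg_cst.
exact: cvgD.
Qed.

Definition pos_part r := if 0 <= r then r else 0.

Lemma pos_part_ge0 r : 0 <= pos_part r.
Proof. by rewrite /pos_part; case: ifP. Qed.

Lemma le_pos_part r : r <= pos_part r.
Proof. by rewrite /pos_part; case: (leP 0 r) => // /ltW. Qed.

Lemma pos_part_eq0 r : r <= 0 -> pos_part r = 0.
Proof.
by rewrite /pos_part; case: (leP 0 r) => // r0 r0'; apply/eqP; rewrite eq_le r0'.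
Qed.

Lemma sqr_pos_part_le0 r : pos_part r ^+ 2 <= 0 -> r <= 0.
Proof. by rewrite /pos_part; case: (leP 0 r) => [r0 r2|/ltW //]; nra. Qed.

Lemma sqr_pos_part_taylor r s :
  0 <= pos_part (r + s) ^+ 2 - pos_part r ^+ 2 - 2 * pos_part r * s <= s ^+ 2.
Proof.
by rewrite /pos_part; case: (leP 0 r) => r0; case: (leP 0 (r + s)) => rs0;
  apply/andP; split; nra.
Qed.

Lemma is_derive_sqr_pos_part r :
  is_derive r 1 (fun s => pos_part s ^+ 2) (2 * pos_part r).
Proof.
have err h : h != 0 ->
    `|h^-1 * (pos_part (h + r) ^+ 2 - pos_part r ^+ 2) - 2 * pos_part r| <= `|h|.
  move=> h0; have /andP[D0 Dh] := sqr_pos_part_taylor r h.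
  rewrite [h + r]addrC.
  have -> : h^-1 * (pos_part (r + h) ^+ 2 - pos_part r ^+ 2) - 2 * pos_part r =
      (pos_part (r + h) ^+ 2 - pos_part r ^+ 2 - 2 * pos_part r * h) / h by field.
  rewrite normrM normfV ler_pdivrMr ?normr_gt0 // -normrM -expr2.
  by rewrite !ger0_norm ?sqr_ge0.
have dq : (fun h => h^-1 *: (((fun s => pos_part s ^+ 2) \o shift r) (h *: 1)
    - pos_part r ^+ 2)) @ 0^' --> 2 * pos_part r.
  apply/cvgrPdist_le => e e0; near=> h.
  have h0 : h != 0 by near: h; exact: nbhs_dnbhs_neq.
  rewrite /= [h%:A]mulr1 distrC; apply: le_trans (err h h0) _.
  near: h; exact: dnbhs0_le.
apply: DeriveDef; first by apply/cvg_ex; exists (2 * pos_part r).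
exact: cvg_lim.
Unshelve. all: by end_near.
Qed.

End RealAnalysis.

Section ExponentialWeights.
Context {R : realType}.
Implicit Types (F dF : R -> R) (q s t : R).

Lemma is_derive_expR_lin q s :
  is_derive s 1 (fun r => expR (- (q * r))) (expR (- (q * s)) * - q).
Proof.
have Dlin : is_derive s 1 (fun r : R => - (q * r)) (- q).
  have := is_deriveN (is_deriveZ q (is_derive_id s (1 : R))).
  by rewrite /GRing.scale /= mulr1.
exact: (@is_derive1_comp _ expR (fun r => - (q * r)) s _ _ (is_derive_expR _) Dlin).
Qed.

Lemma is_derive_expR_weight F q s (d : R) : is_derive s 1 F d ->
  is_derive s 1 (fun r => expR (- (q * r)) * F r) (expR (- (q * s)) * (d - q * F s)).
Proof.
move=> DF; have := is_deriveM (is_derive_expR_lin q s) DF.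
have -> : (fun r => expR (- (q * r))) * F = (fun r => expR (- (q * r)) * F r) by [].
by move/is_derive_eq; apply; rewrite /GRing.scale /=; ring.
Qed.

Lemma cvg_expR_weight_at_right0 {F} q {l : R} : F x @[x --> 0^'+] --> l ->
  (fun s => expR (- (q * s)) * F s) x @[x --> 0^'+] --> l.
Proof.
move=> Fl; rewrite -[l]mul1r; apply: cvgM Fl; apply: cvg_at_right_filter.
have [D _] := is_derive_expR_lin q 0.
rewrite -[X in _ --> X]expR0 -[X in expR X]oppr0 -[X in - X](mulr0 q).
exact: differentiable_continuous ((derivable1_diffP _ _).1 D).
Qed.

Lemma expR_weight_le {F dF} q :
  (forall s, 0 < s -> is_derive s 1 F (dF s)) ->
  (forall s, 0 < s -> q * F s <= dF s) ->
  forall s t, 0 < s -> s <= t -> expR (- (q * s)) * F s <= expR (- (q * t)) * F t.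
Proof.
move=> DF dFge s t s0 st.
have DG (r : R) : 0 < r -> is_derive r 1 (fun r => expR (- (q * r)) * F r)
    (expR (- (q * r)) * (dF r - q * F r)).
  by move=> r0; exact/is_derive_expR_weight/DF.
have pos (r : R) : r \in `]0, t + 1[%R -> 0 < r by rewrite in_itv => /andP[].
apply: (@ger0_derive1_le_oo _ (fun r => expR (- (q * r)) * F r) 0 (t + 1))
  => [r /pos r0|r /pos r0|r||//|//].
- by case: (DG r r0).
- rewrite derive1E (@derive_val _ _ _ _ _ _ _ (DG r r0)).
  by rewrite mulr_ge0 ?expR_ge0 ?subr_ge0 ?dFge.
- rewrite inE /= => /pos r0; apply/differentiable_continuous/derivable1_diffP.
  by case: (DG r r0).
- by rewrite in_itv /= s0 (le_lt_trans st) // ltrDl.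
- by rewrite in_itv /= (lt_le_trans s0 st) ltrDl ltr01.
Qed.

Lemma expR_weight_lt {F dF} q :
  (forall s, 0 < s -> is_derive s 1 F (dF s)) ->
  (forall s, 0 < s -> q * F s < dF s) ->
  forall s t, 0 < s -> s < t -> expR (- (q * s)) * F s < expR (- (q * t)) * F t.
Proof.
move=> DF dFgt s t s0 st.
have DG (r : R) : 0 < r -> is_derive r 1 (fun r => expR (- (q * r)) * F r)
    (expR (- (q * r)) * (dF r - q * F r)).
  by move=> r0; exact/is_derive_expR_weight/DF.
have pos (r : R) : r \in `]0, t + 1[%R -> 0 < r by rewrite in_itv => /andP[].
apply: (@gtr0_derive1_lt_oo _ (fun r => expR (- (q * r)) * F r) 0 (t + 1))
  => [r /pos r0|r /pos r0|r||//|//].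
- by case: (DG r r0).
- rewrite derive1E (@derive_val _ _ _ _ _ _ _ (DG r r0)).
  by rewrite mulr_gt0 ?expR_gt0 ?subr_gt0 ?dFgt.
- rewrite inE /= => /pos r0; apply/differentiable_continuous/derivable1_diffP.
  by case: (DG r r0).
- by rewrite in_itv /= s0 (lt_trans st) // ltrDl.
- by rewrite in_itv /= (lt_trans s0 st) ltrDl ltr01.
Qed.

Lemma gronwall_at_right0 {F dF} (K : R) :
  (forall s, 0 < s -> is_derive s 1 F (dF s)) ->
  (forall s, 0 < s -> dF s <= K * F s) ->
  F x @[x --> 0^'+] --> 0 -> forall t, 0 < t -> F t <= 0.
Proof.
move=> DF dFle F0 t t0.
have DNF s : 0 < s -> is_derive s 1 (fun r => - F r) (- dF s).
  by move=> s0; exact: is_deriveN (DF s s0).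
have dNF s : 0 < s -> K * - F s <= - dF s by rewrite mulrN lerN2; exact: dFle.
have mono := expR_weight_le K DNF dNF.
have G0 : (fun s => expR (- (K * s)) * - F s) x @[x --> 0^'+] --> 0.
  by rewrite -[X in _ --> X]oppr0; apply: cvg_expR_weight_at_right0; exact: cvgN.
have : 0 <= expR (- (K * t)) * - F t.
  by apply: (le_cvg_at_right0 t0 G0) => s /andP[s0 st]; exact: mono (ltW st).
by rewrite pmulr_rge0 ?expR_gt0 // oppr_ge0.
Qed.

End ExponentialWeights.

Lemma fun_sum_indicator1 {X : finType} {R : realType} (f : X -> R) :
  f = (fun y => \sum_w f w * indicator1 w y).
Proof.
apply/funext => y; rewrite (bigD1 y) //= /indicator1 eqxx mulr1 big1 ?addr0 //.
by move=> w wy; rewrite eq_sym (negbTE wy) mulr0.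
Qed.

Lemma sqr_sum_le_card_sum_sqr {X : finType} {R : realDomainType} (p : X -> R) :
  (\sum_x p x) ^+ 2 <= #|X|%:R * \sum_x p x ^+ 2.
Proof.
have -> : (\sum_x p x) ^+ 2 = \sum_x \sum_y p x * p y.
  by rewrite expr2 mulr_suml; apply: eq_bigr => x _; rewrite mulr_sumr.
have sq2 : \sum_x \sum_y (p x ^+ 2 + p y ^+ 2) = 2 * (#|X|%:R * \sum_x p x ^+ 2).
  under eq_bigr do rewrite big_split /=.
  by rewrite big_split /= exchange_big /= sumr_const -mulr_natr -/#|X|; ring.
rewrite -(@ler_pM2l _ 2) // -sq2 mulr_sumr ler_sum // => x _.
rewrite mulr_sumr ler_sum // => y _.
by have := sqr_ge0 (p x - p y); nra.
Qed.

(* Any upper bound on the entries of the upper rate matrix would do. *)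
Definition rate_bound {X : finType} {R : realType} (Q : (X -> R) -> X -> R) : R :=
  \sum_w \sum_z `|upper_op Q (indicator1 w) z|.

Section LowerTransitionRate.
Context {X : finType} {R : realType} {Q : (X -> R) -> X -> R}.
Hypothesis HQ : lower_transition_rate_operator Q.
Implicit Types (f g h u v a : X -> R) (w y z : X).

Lemma lrate_cst0 : Q (fun _ => 0) = (fun _ => 0).
Proof. by case: HQ. Qed.

Lemma lrate_superadd f g z : Q f z + Q g z <= Q (fun y => f y + g y) z.
Proof. by case: HQ => _ + _ _; apply. Qed.

Lemma lrate_scale (lam : R) f z :
  0 <= lam -> Q (fun y => lam * f y) z = lam * Q f z.
Proof. by case: HQ => _ _ + _ => /[apply] ->. Qed.

Lemma lrate_indicator1_ge0 w z : z != w -> 0 <= Q (indicator1 w) z.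
Proof. by case: HQ => _ _ _; apply. Qed.

Lemma lrate_le_upper f z : Q f z <= upper_op Q f z.
Proof.
have := lrate_superadd f (fun y => - f y) z.
have -> : (fun y => f y + - f y) = (fun _ => 0) by apply/funext => y; rewrite subrr.
by rewrite lrate_cst0 /upper_op; lra.
Qed.

Lemma lrate_superadd_sum (I : Type) (r : seq I) (P : pred I) (F : I -> X -> R) z :
  \sum_(i <- r | P i) Q (F i) z <= Q (fun y => \sum_(i <- r | P i) F i y) z.
Proof.
rewrite -fct_sumE; elim/big_ind2: _ => // [|a f b g af bg].
  by have -> : (0 : X -> R) = (fun _ => 0) by []; rewrite lrate_cst0.
exact: le_trans (lerD af bg) (lrate_superadd _ _ _).
Qed.

Lemma lrate_sum_indicator1_le f z :
  \sum_w Q (fun y => f w * indicator1 w y) z <= Q f z.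
Proof. by rewrite {2}(fun_sum_indicator1 f); exact: lrate_superadd_sum. Qed.

Lemma lrate_diag_le h z :
  (forall y, 0 <= h y) -> h z * Q (indicator1 z) z <= Q h z.
Proof.
move=> h0; apply: le_trans (lrate_sum_indicator1_le h z).
rewrite (bigD1 z) //= lrate_scale // lerDl sumr_ge0 // => w wz.
by rewrite lrate_scale // mulr_ge0 // lrate_indicator1_ge0 // eq_sym.
Qed.

Lemma lrate_le_at f g z : (forall y, f y <= g y) -> f z = g z -> Q f z <= Q g z.
Proof.
move=> fg fgz; have := lrate_superadd f (fun y => g y - f y) z.
have -> : (fun y => f y + (g y - f y)) = g by apply/funext => y; rewrite addrC subrK.
move=> sup; apply: le_trans sup; rewrite lerDl.
have gf0 y : 0 <= g y - f y by rewrite subr_ge0.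
by have := lrate_diag_le _ z gf0; rewrite /= fgz subrr mul0r.
Qed.

Lemma upper_op_ge_diag v z :
  (forall y, 0 <= v y) -> Q (indicator1 z) z * v z <= upper_op Q v z.
Proof.
move=> v0; rewrite mulrC.
exact: le_trans (lrate_diag_le v z v0) (lrate_le_upper _ _).
Qed.

Lemma upper_op_ge_edge v w z : (forall y, 0 <= v y) -> w != z ->
  Q (indicator1 z) z * v z + v w * upper_op Q (indicator1 w) z <= upper_op Q v z.
Proof.
move=> v0 wz; pose h y := v y - v w * indicator1 w y.
have h0 y : 0 <= h y.
  by rewrite /h /indicator1; case: eqP => [->|_]; rewrite ?mulr1 ?subrr ?mulr0 ?subr0.
have hz : h z = v z by rewrite /h /indicator1 eq_sym (negbTE wz) mulr0 subr0.
have := lrate_superadd (fun y => - v y) h z.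
have -> : (fun y => - v y + h y) = (fun y => v w * - indicator1 w y).
  by apply/funext => y; rewrite /h; ring.
have := lrate_diag_le h z h0; rewrite hz lrate_scale // /upper_op; lra.
Qed.

Lemma upper_op_le_sum a z : (forall y, 0 <= a y) ->
  upper_op Q a z <= \sum_w a w * upper_op Q (indicator1 w) z.
Proof.
move=> a0; have := lrate_sum_indicator1_le (fun y => - a y) z.
have E w :
    Q (fun y => - a w * indicator1 w y) z = - (a w * upper_op Q (indicator1 w) z).
  rewrite /upper_op mulrN opprK -lrate_scale //; congr (Q _ z).
  by apply/funext => y; ring.
by rewrite (eq_bigr _ (fun w _ => E w)) sumrN {1}/upper_op lerNl.
Qed.

Lemma rate_bound_ge0 : 0 <= rate_bound Q.
Proof. by rewrite sumr_ge0 // => w _; rewrite sumr_ge0. Qed.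

Lemma upper_op_indicator1_le_bound w z : upper_op Q (indicator1 w) z <= rate_bound Q.
Proof.
apply: le_trans (ler_norm _) _.
rewrite /rate_bound (bigD1 w) //= (bigD1 z) //= -addrA lerDl.
by rewrite addr_ge0 ?sumr_ge0 // => w' _; rewrite sumr_ge0.
Qed.

Lemma upper_op_le_bound_sum (U : {pred X}) a z : (forall y, 0 <= a y) ->
  (forall w, w \notin U -> upper_op Q (indicator1 w) z <= 0) ->
  upper_op Q a z <= rate_bound Q * \sum_(w in U) a w.
Proof.
move=> a0 outU; apply: le_trans (upper_op_le_sum _ _ a0) _.
rewrite (bigID (mem U)) /= mulr_sumr -[X in _ <= X]addr0 lerD //.
  apply: ler_sum => w _; rewrite [rate_bound Q * _]mulrC.
  by apply: ler_wpM2l; [exact: a0 | exact: upper_op_indicator1_le_bound].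
by apply: sumr_le0 => w nUw; rewrite mulr_ge0_le0 // outU.
Qed.

Lemma lrate_le_bound_sum_pos_part u z :
  0 <= u z -> Q u z <= rate_bound Q * \sum_w pos_part (u w).
Proof.
move=> uz0; have le_pos : Q u z <= Q (fun y => pos_part (u y)) z.
  by apply: lrate_le_at => [y|]; [exact: le_pos_part | rewrite /pos_part uz0].
apply: le_trans le_pos (le_trans (lrate_le_upper _ _) _).
by apply: (upper_op_le_bound_sum xpredT) => // y; exact: pos_part_ge0.
Qed.

Lemma sum_pos_part_lrate_le u :
  \sum_z 2 * pos_part (u z) * Q u z <=
  2 * rate_bound Q * #|X|%:R * \sum_z pos_part (u z) ^+ 2.
Proof.
apply: (@le_trans _ _
  (\sum_z 2 * pos_part (u z) * (rate_bound Q * \sum_w pos_part (u w)))).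
  apply: ler_sum => z _; case: (leP 0 (u z)) => uz.
    apply: ler_wpM2l; first by rewrite mulr_ge0 ?pos_part_ge0.
    exact: lrate_le_bound_sum_pos_part.
  by rewrite pos_part_eq0 ?(ltW uz) // mulr0 !mul0r.
rewrite -mulr_suml -mulr_sumr.
have := ler_wpM2l rate_bound_ge0 (sqr_sum_le_card_sum_sqr (fun z => pos_part (u z))).
by rewrite /=; nra.
Qed.

End LowerTransitionRate.

Section UpperReachability.
Context {X : finType} {R : realType} {Q : (X -> R) -> X -> R}.

Lemma upper_reachable_refl x : upper_reachable Q x x.
Proof. by exists 0%N, (fun _ => x); split=> // -[|k] /andP[]. Qed.

Lemma upper_reachable_step x w z : upper_reachable Q x w -> w != z ->
  0 < upper_op Q (indicator1 w) z -> upper_reachable Q x z.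
Proof.
case=> n [s [s0 sn path_s]] wz wz_gt0.
exists n.+1, (fun k => if k is k'.+1 then s k' else z); split=> //.
by case=> [|[|k]] //= kn; [rewrite s0 | exact: path_s].
Qed.

Lemma upper_reachable_ind (P : X -> Prop) x : P x ->
  (forall w z, P w -> w != z -> 0 < upper_op Q (indicator1 w) z -> P z) ->
  forall y, upper_reachable Q x y -> P y.
Proof.
move=> Px Pstep y [n [s [s0 sn path_s]]].
elim: n s y s0 sn path_s => [|n IH] s y s0 sn path_s; first by rewrite -s0 sn.
have [s10 s10_gt0] := path_s 1%N isT; rewrite s0 in s10 s10_gt0.
apply: Pstep s10 s10_gt0; apply: (IH (fun k => s k.+1)) => // k /andP[k1 kn].
by have := path_s k.+1; rewrite /= ltnS kn prednK // => /(_ isT).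
Qed.

End UpperReachability.

Section LowerSemigroup.
Context {X : finType} {R : realType} {Q : (X -> R) -> X -> R}
  {T : R -> (X -> R) -> X -> R}.
Hypotheses (HQ : lower_transition_rate_operator Q) (HT : lower_semigroup_of Q T).
Implicit Types (f : X -> R) (w x y z : X) (s t : R).

Lemma lower_semigroup_is_derive f z t :
  0 < t -> is_derive t 1 (fun s => T s f z) (Q (T t f) z).
Proof.
move=> t0; have [_ [_ /(_ t z t0) [Df <-]]] := HT f.
by rewrite derive1E; exact: derivableP.
Qed.

Lemma lower_semigroup_cvg0 f z : (fun s => T s f z) x @[x --> 0^'+] --> f z.
Proof. by have [_ [/(_ z) dq _]] := HT f; exact: cvg_at_right0_of_diff_quotient dq. Qed.

Lemma lower_semigroup_le0 f : (forall y, f y <= 0) ->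
  forall t, 0 < t -> forall z, T t f z <= 0.
Proof.
move=> f0 t t0 z; pose F s := \sum_y pos_part (T s f y) ^+ 2.
have DF s : 0 < s ->
    is_derive s 1 F (\sum_y 2 * pos_part (T s f y) * Q (T s f) y).
  move=> s0; apply: is_derive_fct_sum => y _.
  exact: (@is_derive1_comp _ (fun r => pos_part r ^+ 2) (fun r => T r f y) s _ _
    (is_derive_sqr_pos_part _) (lower_semigroup_is_derive _ _ _ s0)).
have F0 : F x @[x --> 0^'+] --> 0.
  have E0 : \sum_y pos_part (f y) ^+ 2 = 0.
    by rewrite big1 // => y _; rewrite pos_part_eq0 // expr0n.
  have cvg_y y :
      (fun s => pos_part (T s f y) ^+ 2) x @[x --> 0^'+] --> pos_part (f y) ^+ 2.
    apply: (@continuous_cvg _ _ _ _ _ _ (fun r : R => pos_part r ^+ 2) _ _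
      (lower_semigroup_cvg0 f y)).
    apply/differentiable_continuous/derivable1_diffP.
    by case: (is_derive_sqr_pos_part (f y)).
  by rewrite -[X in _ --> X]E0 /F; exact: cvg_fct_sum.
have Ft := gronwall_at_right0 _ DF (fun s _ => sum_pos_part_lrate_le HQ (T s f)) 
  F0 _ t0.
apply: sqr_pos_part_le0; apply: le_trans Ft.
by rewrite /F (bigD1 z) //= lerDl sumr_ge0 // => y _; exact: sqr_ge0.
Qed.

Lemma upper_semigroup_is_derive f z t : 0 < t ->
  is_derive t 1 (fun s => upper_semigroup T s f z)
    (upper_op Q (upper_semigroup T t f) z).
Proof.
move=> t0; rewrite /upper_semigroup /upper_op.
have -> : (fun y => - - T t (fun x => - f x) y) = T t (fun x => - f x).
  by apply/funext => y; rewrite opprK.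
exact: is_deriveN (lower_semigroup_is_derive _ _ _ t0).
Qed.

Lemma upper_semigroup_cvg0 f z :
  (fun s => upper_semigroup T s f z) x @[x --> 0^'+] --> f z.
Proof. by rewrite -[X in _ --> X]opprK; exact: cvgN (lower_semigroup_cvg0 _ _). Qed.

Lemma upper_semigroup_ge0 f : (forall y, 0 <= f y) ->
  forall t, 0 < t -> forall z, 0 <= upper_semigroup T t f z.
Proof.
move=> f0 t t0 z; rewrite /upper_semigroup oppr_ge0.
by apply: lower_semigroup_le0 => // y; rewrite oppr_le0.
Qed.

Lemma upper_semigroup_gt0 f z : (forall y, 0 <= f y) -> 0 < f z ->
  forall t, 0 < t -> 0 < upper_semigroup T t f z.
Proof.
move=> f0 fz t t0; set q := Q (indicator1 z) z.
have mono := expR_weight_le q (fun s s_gt0 => upper_semigroup_is_derive f z s s_gt0)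
  (fun s s_gt0 => upper_op_ge_diag HQ _ z (upper_semigroup_ge0 _ f0 _ s_gt0)).
have : f z <= expR (- (q * t)) * upper_semigroup T t f z.
  apply: (le_cvg_at_right0 t0 (cvg_expR_weight_at_right0 q (upper_semigroup_cvg0 f z))).
  by move=> s /andP[s0 st]; exact: mono (ltW st).
by rewrite -(pmulr_rgt0 _ (expR_gt0 (- (q * t)))); exact: lt_le_trans.
Qed.

Lemma upper_semigroup_gt0_edge f w z : (forall y, 0 <= f y) -> w != z ->
  0 < upper_op Q (indicator1 w) z ->
  (forall t, 0 < t -> 0 < upper_semigroup T t f w) ->
  forall t, 0 < t -> 0 < upper_semigroup T t f z.
Proof.
move=> f0 wz wz_gt0 vw_gt0 t t0; set q := Q (indicator1 z) z.
have dv s : 0 < s ->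
    q * upper_semigroup T s f z < upper_op Q (upper_semigroup T s f) z.
  move=> s0; have v_ge0 := upper_semigroup_ge0 _ f0 _ s0.
  apply: lt_le_trans (upper_op_ge_edge HQ _ _ _ v_ge0 wz).
  by rewrite ltrDl mulr_gt0 ?vw_gt0.
have t2 : 0 < t / 2 by rewrite divr_gt0.
have t2t : t / 2 < t by rewrite ltr_pdivrMr // mulr_natr mulr2n ltrDr.
have := expR_weight_lt q (fun s s_gt0 => upper_semigroup_is_derive f z s s_gt0)
  dv _ _ t2 t2t.
rewrite -(pmulr_rgt0 _ (expR_gt0 (- (q * t)))); apply: le_lt_trans.
by rewrite mulr_ge0 ?expR_ge0 ?(upper_semigroup_ge0 _ f0 _ t2).
Qed.

Lemma upper_semigroup_le0_closed (U : {pred X}) f : (forall y, 0 <= f y) ->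
  (forall z, z \in U -> f z = 0) ->
  (forall w z, z \in U -> w \notin U -> upper_op Q (indicator1 w) z <= 0) ->
  forall t, 0 < t -> forall z, z \in U -> upper_semigroup T t f z <= 0.
Proof.
move=> f0 fU closedU t t0 z Uz; pose F s := \sum_(y in U) upper_semigroup T s f y.
have DF s : 0 < s ->
    is_derive s 1 F (\sum_(y in U) upper_op Q (upper_semigroup T s f) y).
  by move=> s0; apply: is_derive_fct_sum => y _; exact: upper_semigroup_is_derive.
have bound s : 0 < s ->
    \sum_(y in U) upper_op Q (upper_semigroup T s f) y <= rate_bound Q * #|U|%:R * F s.
  move=> s0; apply: le_trans (ler_sum _ (fun y Uy => upper_op_le_bound_sum HQ U _ y
    (upper_semigroup_ge0 _ f0 _ s0) (fun w nUw => closedU w y Uy nUw))) _.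
  by rewrite sumr_const /F -[X in X <= _]mulr_natr mulrAC; exact: lexx.
have F0 : F x @[x --> 0^'+] --> 0.
  have E0 : \sum_(y in U) f y = 0 by apply: big1.
  by rewrite -[X in _ --> X]E0; apply: cvg_fct_sum => y _; exact: upper_semigroup_cvg0.
apply: le_trans (gronwall_at_right0 _ DF bound F0 _ t0).
by rewrite /F (bigD1 z) //= lerDl sumr_ge0 // => y _; exact: upper_semigroup_ge0.
Qed.

Lemma upper_semigroup_indicator1_gt0 x y : upper_reachable Q x y ->
  forall t, 0 < t -> 0 < upper_semigroup T t (indicator1 x) y.
Proof.
have I0 z : 0 <= indicator1 x z :> R by rewrite /indicator1; case: eqP.
move: y; apply: upper_reachable_ind => [|w z vw_gt0 wz wz_gt0].
  by apply: upper_semigroup_gt0 => //; rewrite /indicator1 eqxx.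
exact: (upper_semigroup_gt0_edge _ _ _ I0 wz wz_gt0 vw_gt0).
Qed.

Lemma upper_semigroup_indicator1_le0 x y : ~ upper_reachable Q x y ->
  forall t, 0 < t -> upper_semigroup T t (indicator1 x) y <= 0.
Proof.
move=> unreach_y t t0; pose U := [pred z | ~~ `[< upper_reachable Q x z >]].
apply: (upper_semigroup_le0_closed U) => //.
- by move=> z; rewrite /indicator1; case: eqP.
- move=> z; rewrite inE => /negP Uz; rewrite /indicator1; case: eqP => // zx.
  by case: Uz; apply/asboolP; rewrite zx; exact: upper_reachable_refl.
- move=> w z; rewrite !inE => /negP Uz /negPn /asboolP reach_w.
  have wz : w != z by apply/eqP => wz; apply: Uz; apply/asboolP; rewrite -wz.
  rewrite leNgt; apply/negP => wz_gt0; apply: Uz; apply/asboolP.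
  exact: upper_reachable_step reach_w wz wz_gt0.
- by rewrite inE; apply/negP => /asboolP.
Qed.

End LowerSemigroup.

Theorem proposition11 (X : finType) (R : realType)
  (Q : (X -> R) -> (X -> R)) (T : R -> (X -> R) -> (X -> R)) :
  lower_transition_rate_operator Q ->
  lower_semigroup_of Q T ->
  forall (t : R), 0 < t -> forall x y : X,
    0 < upper_semigroup T t (indicator1 x) y <-> upper_reachable Q x y.
Proof.
move=> HQ HT t t0 x y; split=> [|reach_xy].
  apply: contraPP => unreach_y; apply/negP; rewrite -leNgt.
  exact: (upper_semigroup_indicator1_le0 HQ HT _ _ unreach_y _ t0).
exact: (upper_semigroup_indicator1_gt0 HQ HT _ _ reach_xy _ t0).
Qed.
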